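(* For a locally convex space $E$ consider the properties: (1) $E$ has an $\omega^\omega$-base; (2) $E$ has a countable $\mathsf s^*$-network at zero; (3) $E$ has a countable $\mathsf{cs}^*$-network at zero; (4) $E$ has a countable $\mathsf{cs}^\bullet$-network at zero; (5) $E$ has a countable radial network; (6) each uncountable subset of $E$ contains an infinite bounded subset; (7) $E$ contains an infinite-dimensional compact set. Then $(1)\Rightarrow(2)\Rightarrow(3)\Rightarrow(4)\Rightarrow(5)\Rightarrow(6)$. If moreover $E$ has an uncountable Hamel basis, then $(6)\Rightarrow(7)$.
   Context: $E$ has an $\omega^\omega$-base if there is a neighborhood base $(U_\alpha)_{\alpha\in\omega^\omega}$ at zero with $U_\beta\subseteq U_\alpha$ whenever $\alpha\le\beta$ pointwise. A sequence $(x_n)$ accumulates at $x$ if every neighborhood of $x$ contains $x_n$ for infinitely many $n$. A family $\mathcal N$ of subsets of $E$ is: an $\mathsf s^*$-network at $x$ if for every neighborhood $O_x$ of $x$ and every sequence $(x_n)$ accumulating at $x$ there is $N\in\mathcal N$ with $N\subseteq O_x$ and $\{n:x_n\in N\}$ infinite; a $\mathsf{cs}^*$-network at $x$ if the same holds for every sequence converging to $x$; a $\mathsf{cs}^\bullet$-network at $x$ if for every neighborhood $O_x$ of $x$ and every sequence $(x_n)$ converging to $x$ there is $N\in\mathcal N$ with $N\subseteq O_x$ containing some $x_n$. A radial network is a family $\mathcal N$ of subsets of $E$ such that for every neighborhood $U$ of zero and every $x\in E$ there are $N\in\mathcal N$ and a nonzero real $\varepsilon$ with $\varepsilon x\in N\subseteq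 U$. Bounded: $B\subseteq nU$ for some $n$, for every neighborhood $U$ of zero. An infinite-dimensional compact set is one of infinite topological dimension (equivalently, not contained in a finite-dimensional subspace). *)

From HB Require Import structures.
From mathcomp Require Import all_boot all_order all_algebra.
From mathcomp Require Import all_classical all_reals all_analysis.
Set Implicit Arguments. Unset Strict Implicit. Unset Printing Implicit Defensive.
Import Order.TTheory GRing.Theory Num.Theory.
Local Open Scope classical_set_scope.
Local Open Scope ring_scope.

Section Defs.
Variables (R : realType) (E : tvsType R).

Definition has_omega_omega_base : Prop :=
  exists U : (nat -> nat) -> set E,
    (forall a, nbhs (0 : E) (U a)) /\
    (forall V, nbhs (0 : E) V -> exists a, U a `<=` V) /\
    (forall a b : nat -> nat, (forall n, (a n <= b n)%N) -> U b `<=` U a).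

Definition clusters_at (u : nat -> E) (x : E) : Prop :=
  forall V, nbhs x V -> infinite_set [set n | V (u n)].

Definition s_star_network_at (Nf : set (set E)) (x : E) : Prop :=
  forall O, nbhs x O -> forall u : nat -> E, clusters_at u x ->
    exists2 N, Nf N & N `<=` O /\ infinite_set [set n | N (u n)].

Definition cs_star_network_at (Nf : set (set E)) (x : E) : Prop :=
  forall O, nbhs x O -> forall u : nat -> E, u @ \oo --> x ->
    exists2 N, Nf N & N `<=` O /\ infinite_set [set n | N (u n)].

Definition cs_bullet_network_at (Nf : set (set E)) (x : E) : Prop :=
  forall O, nbhs x O -> forall u : nat -> E, u @ \oo --> x ->
    exists2 N, Nf N & N `<=` O /\ exists n, N (u n).

Definition radial_network (Nf : set (set E)) : Prop :=
  forall U, nbhs (0 : E) U -> forall x : E,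
    exists2 N, Nf N & exists eps : R, eps != 0 /\ N (eps *: x) /\ N `<=` U.

Definition tvs_bounded (B : set E) : Prop :=
  forall U, nbhs (0 : E) U -> exists n : nat, B `<=` [set n%:R *: u | u in U].

Definition fin_span (n : nat) (v : 'I_n -> E) : set E :=
  [set \sum_(i < n) c i *: v i | c in [set: 'I_n -> R]].

Definition hamel_basis (B : set E) : Prop :=
  (forall (n : nat) (v : 'I_n -> E) (c : 'I_n -> R),
      injective v -> (forall i, B (v i)) ->
      \sum_(i < n) c i *: v i = 0 -> forall i, c i = 0) /\
  (forall x : E, exists n (v : 'I_n -> E),
      (forall i, B (v i)) /\ fin_span v x).

Definition P1 := has_omega_omega_base.
Definition P2 := exists Nf, countable Nf /\ s_star_network_at Nf 0.
Definition P3 := exists Nf, countable Nf /\ cs_star_network_at Nf 0.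
Definition P4 := exists Nf, countable Nf /\ cs_bullet_network_at Nf 0.
Definition P5 := exists Nf, countable Nf /\ radial_network Nf.
Definition P6 := forall A : set E, ~ countable A ->
  exists B, B `<=` A /\ infinite_set B /\ tvs_bounded B.
Definition P7 := exists K : set E, compact K /\
  forall (n : nat) (v : 'I_n -> E), ~ (K `<=` fin_span v).

End Defs.

From HB Require Import structures.
From mathcomp Require Import all_boot all_order all_algebra.
From mathcomp Require Import all_classical all_reals all_analysis.
Import Order.TTheory GRing.Theory Num.Theory.
Local Open Scope classical_set_scope.
Local Open Scope ring_scope.

(* (1) -> (2): for an omega^omega-base (U_a), the sets D(s), intersections of
   the U_b over all b extending a finite sequence s, form a countable family.
   If a sequence clustering at 0 met each D(g|k) only finitely often, the
   witnesses b of its escape from D(g|k) could all be dominated by a single c,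
   and U_c would contain only finitely many of its terms.
   (4) -> (5): apply the cs-bullet-network to the null sequence x / (n + 1).
   (5) -> (6): code each x by k |-> (a bound on |1/eps| with eps x in the k-th
   member of the radial network).  Among uncountably many points, some y has
   infinitely many points sharing each finite initial segment of its code;
   choosing j + 1 of them at each length j gives an infinite set which, up to
   finitely many points, lies in a fixed dilate of a member close to 0.
   (6) -> (7): an infinite bounded subset of the Hamel basis gives an injective
   sequence b; then 0 together with the null sequence b_n / (n + 1) is
   compact, and by independence it spans an infinite-dimensional subspace. *)

Lemma infinite_set_injective_seq {T : Type} {A : set T} :
  infinite_set A -> exists2 b : nat -> T, (forall n, A (b n)) & injective b.
Proof.
move/infiniteP => /card_leP [f].
exists (fun n => val (f (@SigSub _ _ _ n (mem_set I)))).
  by move=> n; exact: (set_valP (f _)).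
move=> m n /val_inj /(@inj _ _ _ f) fmn.
by have [] := fmn (in_setT _) (in_setT _).
Qed.

Lemma finite_set_nat_bounded (A : set nat) :
  finite_set A -> exists M, forall m, A m -> (m < M)%N.
Proof.
move=> /finite_seqP[s ->]; exists (\max_(i <- s) i).+1 => m ms.
by rewrite ltnS; apply: (@leq_bigmax_seq _ _ _ id).
Qed.

Lemma mkseq_eqP (T : Type) (f g : nat -> T) (n : nat) :
  mkseq f n = mkseq g n <-> forall i, (i < n)%N -> f i = g i.
Proof.
split=> [fg i ltin | fg].
  by have := congr1 (fun s => nth (f 0%N) s i) fg; rewrite /= !nth_mkseq.
apply: (@eq_from_nth _ (f 0%N)); rewrite ?size_mkseq // => i ltin.
by rewrite !nth_mkseq ?fg.
Qed.

Lemma uncountable_condensation {T : Type} {A : set T} (h : T -> nat -> nat) :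
  ~ countable A -> exists y, forall j,
    infinite_set [set x | A x /\ forall i, (i < j)%N -> h x i = h y i].
Proof.
move=> Aunc; apply: contrapT => /forallNP noy; apply: Aunc.
pose G (s : seq nat) := [set x | A x /\ mkseq (h x) (size s) = s].
have AG : A `<=` \bigcup_(s in [set s | finite_set (G s)]) G s.
  move=> x Ax.
  have [j xfin] : exists j,
      finite_set [set z | A z /\ forall i, (i < j)%N -> h z i = h x i].
    by apply: contrapT => /forallNP xinf; apply: (noy x) => j; exact: xinf.
  exists (mkseq (h x) j); last by rewrite /G /= size_mkseq.
  rewrite /G /= size_mkseq.
  by apply: sub_finite_set xfin => z [Az /mkseq_eqP hz].
apply: sub_countable (subset_card_le AG) _.
by apply: bigcup_countable => // s; exact: finite_set_countable.
Qed.

Lemma infinite_set_of_injective_rows {T : eqType} {B : set T} {e : nat -> nat -> T} :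
  (forall j, injective (e j)) -> (forall j i, (i <= j)%N -> B (e j i)) ->
  infinite_set B.
Proof.
move=> einj eB /finite_seqP[s Bs].
have : (size (mkseq (e (size s)) (size s).+1) <= size s)%N.
  apply: uniq_leq_size; first exact: mkseq_uniq.
  move=> x /mapP[i]; rewrite mem_iota add0n => /andP[_ lti] ->.
  have : B (e (size s) i) by apply: eB; rewrite -ltnS.
  by rewrite Bs.
by rewrite size_mkseq ltnn.
Qed.

Lemma bounded_prefix_family {g : nat -> nat} {b : nat -> nat -> nat}
    {kappa L : nat -> nat} :
  (forall m i, (i < kappa m)%N -> b m i = g i) ->
  (forall m i, (kappa m <= i)%N -> (m < L i)%N) ->
  exists c : nat -> nat, forall m i, (b m i <= c i)%N.
Proof.
move=> bg kL; exists (fun i => maxn (g i) (\max_(m < L i) b m i)) => m i.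
have [/bg -> | /kL ltmL] := ltnP i (kappa m); first exact: leq_maxl.
apply: leq_trans (leq_maxr _ _).
exact: (@leq_bigmax _ (fun m : 'I_(L i) => b m i) (Ordinal ltmL)).
Qed.

Lemma exists_slow_index (M : nat -> nat) : exists kappa : nat -> nat,
  (forall m, (M 0 <= m)%N -> (M (kappa m) <= m)%N) /\
  (forall m i, (kappa m <= i)%N -> (m < maxn i.+1 (M i.+1))%N).
Proof.
exists (fun m => \max_(k < m.+1 | (M k <= m)%N) k); split.
  move=> m M0m; rewrite (bigop.bigmax_eq_arg ord0) //.
  by case: (@arg_maxnP _ ord0 (fun k : 'I_m.+1 => (M k <= m)%N) val M0m) => k Mk _.
move=> m i kmi; rewrite ltnNge geq_max; apply/negP => /andP[ltim Mim].
have := @leq_bigmax_cond _ (fun k : 'I_m.+1 => (M k <= m)%N) val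
  (Ordinal (ltim : (i.+1 < m.+1)%N)) Mim.
by move=> /leq_trans/(_ kmi); rewrite ltnn.
Qed.

Definition prefix_core {T : Type} (U : (nat -> nat) -> set T) (s : seq nat) : set T :=
  \bigcap_(b in [set b | mkseq b (size s) = s]) U b.

Lemma cvg_compact_range (T : topologicalType) (u : nat -> T) (x : T) :
  u @ \oo --> x -> compact (x |` range u).
Proof.
move=> ux F PF FK.
have [xF|nxF] := pselect (cluster F x); first by exists x; split => //; left.
have [G [V [FG [Vx GV]]]] : exists G V, F G /\ nbhs x V /\ ~ (G `&` V !=set0).
  apply: contrapT => noGV; apply: nxF => G V FG Vx; apply: contrapT => GV.
  by apply: noGV; exists G, V.
have [N _ uV] := ux V Vx.
have FuN : F (u @` `I_N).
  apply: filterS (filterI FK FG) => z [[->|[m _ <-]] Gz].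
    by exfalso; apply: GV; exists x; split => //; exact: nbhs_singleton.
  have [ltmN|leNm] := ltnP m N; first by exists m.
  by exfalso; apply: GV; exists (u m); split => //; exact: uV.
have [_ [[m _ <-] um]] := finite_compact (finite_image u (finite_II N)) PF FuN.
by exists (u m); split => //; right; exists m.
Qed.

Section TopologicalVectorSpace.
Variables (R : realType) (E : tvsType R).

Definition lin_independent (B : set E) : Prop :=
  forall (n : nat) (v : 'I_n -> E) (c : 'I_n -> R),
    injective v -> (forall i, B (v i)) ->
    \sum_(i < n) c i *: v i = 0 -> forall i, c i = 0.

Lemma fin_span_dependent (n : nat) (v : 'I_n -> E) (y : 'I_n.+1 -> E) :
  (forall j, fin_span v (y j)) ->
  exists2 w : 'I_n.+1 -> R, (exists j, w j != 0) & \sum_(j < n.+1) w j *: y j = 0.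
Proof.
move=> yv.
have /choice [c yc] : forall j, exists c : 'I_n -> R, \sum_(i < n) c i *: v i = y j.
  by move=> j; have [c _ cj] := yv j; exists c.
pose C : 'M[R]_(n.+1, n) := \matrix_(j, i) c j i.
have kerC0 : kermx C != 0.
  apply/negP => /eqP kerC; have := mxrank_ker C; rewrite kerC mxrank0 => /esym/eqP.
  by rewrite subn_eq0 leqNgt ltnS rank_leq_col.
have [j0 kerj0] : exists j0, row j0 (kermx C) != 0.
  apply: contrapT => /forallNP kerC; move/negP: kerC0; apply; apply/eqP/row_matrixP => i.
  by rewrite row0; apply/eqP/negPn/negP; exact: kerC.
pose w := row j0 (kermx C).
have wC : w *m C = 0 by rewrite /w -row_mul mulmx_ker row0.
exists (fun j => w 0 j).
  apply: contrapT => /forallNP w0; move/negP: kerj0; apply; apply/eqP/rowP => j.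
  by rewrite [RHS]mxE; apply/eqP/negPn/negP; exact: w0.
under eq_bigr => j _ do rewrite -yc scaler_sumr.
rewrite exchange_big /=; apply: big1 => i _.
have wCi : \sum_(j < n.+1) w 0 j * c j i = 0.
  have := congr1 (fun M : 'M[R]_(1, n) => M 0 i) wC; rewrite /= [RHS]mxE mxE => wCi.
  by rewrite -[RHS]wCi; apply: eq_bigr => j _; rewrite [C _ _]mxE.
by rewrite -[RHS](scale0r (v i)) -wCi scaler_suml; apply: eq_bigr => j _; rewrite scalerA.
Qed.

Lemma lin_independent_not_fin_span {B : set E} {b : nat -> E} {a : nat -> R} :
  lin_independent B -> injective b -> (forall k, B (b k)) -> (forall k, a k != 0) ->
  forall n (v : 'I_n -> E), ~ (range (fun k => a k *: b k) `<=` fin_span v).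
Proof.
move=> Bfree binj bB a0 n v abv.
have [w [j wj0] wab] :=
  @fin_span_dependent n v (fun j : 'I_n.+1 => a j *: b j) (fun j => abv _ (imageT _ _)).
have bjinj : injective (fun j : 'I_n.+1 => b j) by move=> j1 j2 /binj/val_inj.
have waj : w j * a j = 0.
  apply: (Bfree n.+1 _ (fun j => w j * a j) bjinj (fun j => bB j)).
  by rewrite -[RHS]wab; apply: eq_bigr => i _; rewrite scalerA.
by move/eqP: waj; rewrite mulf_eq0 (negbTE wj0) (negbTE (a0 j)).
Qed.

Lemma nbhs0_scale {U : set E} (x : E) : nbhs 0 U ->
  exists2 d : R, 0 < d &
    exists2 W : set E, nbhs x W & forall t w, `|t| < d -> W w -> U (t *: w).
Proof.
move=> U0; have /= := @scale_continuous R E (0, x) U.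
rewrite scale0r => /(_ U0)[]/= B [B1 B2] BU.
move: B1 => /nbhs_ballP[d d0 Bd].
exists d => //; exists B.2 => // t w td Ww.
apply: (BU (t, w)); split => //=; apply: Bd.
by rewrite /ball /= sub0r normrN.
Qed.

Lemma nbhs0_absorbs_point {U : set E} (x : E) : nbhs 0 U ->
  \forall n \near \oo, [set n%:R *: u | u in U] x.
Proof.
move=> U0; have [d d0 [W /nbhs_singleton Wx dW]] := nbhs0_scale x U0.
near=> n.
have n0 : (0 < n)%N by near: n; exact: nbhs_infty_gt.
have dn : d^-1 < n%:R by near: n; exact: nbhs_infty_gtr.
exists (n%:R^-1 *: x); last by rewrite scalerA divff ?scale1r // pnatr_eq0 -lt0n.
by apply: dW Wx; rewrite ger0_norm ?invr_ge0 // invf_plt ?posrE ?ltr0n.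
Unshelve. all: by end_near.
Qed.

Lemma tvs_bounded_set1 (x : E) : tvs_bounded [set x].
Proof.
move=> U U0; have [N _ xN] := nbhs0_absorbs_point x U0.
by exists N => _ ->; exact: (xN N (leqnn N)).
Qed.

Lemma nbhs0_absorbs_finite {U B : set E} : nbhs 0 U -> finite_set B ->
  \forall n \near \oo, B `<=` [set n%:R *: u | u in U].
Proof.
move=> U0 /finite_seqP[s ->]; elim: s => [|x s IHs].
  by apply: nearW => n y; rewrite /= in_nil.
apply: filterS (filterI (nbhs0_absorbs_point x U0) IHs) => n [xn sn] y.
by rewrite /= in_cons => /orP[/eqP->|/sn].
Qed.

Lemma cvg_scale_bounded0 {a : nat -> R} {b : nat -> E} {B : set E} :
  a @ \oo --> 0 -> tvs_bounded B -> (forall n, B (b n)) ->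
  (fun n => a n *: b n) @ \oo --> 0.
Proof.
move=> a0 Bbd bB V V0.
have [d d0 [W W0 dW]] := nbhs0_scale 0 V0.
have [m Bm] := Bbd W W0.
have small : \forall n \near \oo, `|a n| < d / m.+1%:R.
  by move/cvgr0Pnorm_lt : a0; apply; rewrite divr_gt0.
suff : \forall n \near \oo, V (a n *: b n) by [].
near=> n; have [w Ww <-] := Bm _ (bB n).
rewrite /= scalerA; apply: dW Ww; rewrite normrM normr_nat.
have an : `|a n| * m.+1%:R < d by rewrite -ltr_pdivlMr //; near: n.
by apply: le_lt_trans an; rewrite ler_wpM2l // ler_nat.
Unshelve. all: by end_near.
Qed.

Definition dilates (F : set E) (m : nat) : set E :=
  [set x | exists2 eps : R, eps != 0 & F (eps *: x) /\ `|eps^-1| < m%:R].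

Lemma dilates_absorbed {U W : set E} {d : R} (m : nat) : 0 < d ->
  (forall t w, `|t| < d -> W w -> U (t *: w)) ->
  \forall n \near \oo, dilates W m `<=` [set n%:R *: u | u in U].
Proof.
move=> d0 dW; near=> n => x [eps eps0 [Wx epsm]].
have mn : m%:R / d < n%:R by near: n; exact: nbhs_infty_gtr.
have n0 : (0 : R) < n%:R by apply: le_lt_trans mn; rewrite divr_ge0 // ltW.
exists ((n%:R * eps)^-1 *: (eps *: x)).
  apply: dW Wx; rewrite invfM normrM normfV normr_nat mulrC ltr_pdivrMr //.
  by apply: lt_trans epsm _; rewrite mulrC -ltr_pdivrMr.
by rewrite !scalerA invfM mulrA mulfV ?gt_eqF // mul1r mulVf ?scale1r.
Unshelve. all: by end_near.
Qed.

(* [0] when no member of [Nf] with code [k] contains a nonzero multiple of [x] *)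
Definition radial_code (Nf : set (set E)) (code : set E -> nat) (x : E) (k : nat) :
    nat :=
  xget 0%N [set m | exists2 F, Nf F /\ code F = k & dilates F m x].

Lemma radial_codeP {Nf : set (set E)} {code : set E -> nat} {x : E} {k : nat} :
  (radial_code Nf code x k != 0)%N ->
  exists2 F, Nf F /\ code F = k & dilates F (radial_code Nf code x k) x.
Proof. by rewrite /radial_code; case: xgetP => [m _ Pm _ | _] //; rewrite eqxx. Qed.

Lemma radial_code_neq0 {Nf : set (set E)} (code : set E -> nat)
    {F : set E} {x : E} {eps : R} :
  Nf F -> eps != 0 -> F (eps *: x) -> (radial_code Nf code x (code F) != 0)%N.
Proof.
move=> NfF eps0 Fx; rewrite /radial_code.
case: xgetP => [m _ [_ _ [e _ [_ em]]] | noP].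
  by apply: contraTneq em => ->; rewrite mulr0n ltNge normr_ge0.
have [] := noP (Num.bound `|eps^-1|); exists F => //; exists eps => //.
by split => //; apply: archi_boundP.
Qed.

Lemma cvg_clusters_at (u : nat -> E) (x : E) : u @ \oo --> x -> clusters_at u x.
Proof.
move=> ux V /ux[N _ uV]; apply: cofinite_set_infinite infinite_nat _.
apply: sub_finite_set (finite_II N) => n /= nV; rewrite ltnNge; apply/negP => /uV.
exact: nV.
Qed.

Lemma omega_base_s_star_network : P1 E -> P2 E.
Proof.
move=> [U [U0 [Ubase Umono]]].
exists (range (prefix_core U)); split.
  exact: sub_countable (card_image_le _ _) (countableP _).
move=> O O0 u ucl; have [g gO] := Ubase O O0.
suff [k kinf] : exists k, infinite_set [set m | prefix_core U (mkseq g k) (u m)].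
  exists (prefix_core U (mkseq g k)); first exact: imageT.
  split=> //; apply: subset_trans gO; apply: bigcap_inf.
  by rewrite /= size_mkseq.
apply: contrapT => /forallNP kfin.
have /choice [M HM] : forall k, exists M,
    forall m, prefix_core U (mkseq g k) (u m) -> (m < M)%N.
  by move=> k; apply: finite_set_nat_bounded; exact: contrapT (kfin k).
have /choice [f fP] : forall km : nat * nat, exists b : nat -> nat,
    (forall i, (i < km.1)%N -> b i = g i) /\ ((M km.1 <= km.2)%N -> ~ U b (u km.2)).
  move=> [k m] /=; have [Mkm|ltmM] := leqP (M k) m; last first.
    by exists g; split => //; rewrite leqNgt ltmM.
  have npc : ~ prefix_core U (mkseq g k) (u m) by move=> /HM; rewrite ltnNge Mkm.
  have [b /not_implyP[bg nUb]] : exists b, ~ (mkseq b k = mkseq g k -> U b (u m)).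
    by apply/existsNP => allb; apply: npc => b; rewrite /= size_mkseq; exact: allb.
  by exists b; split => //; exact/mkseq_eqP.
have [kappa [kM kL]] := exists_slow_index M.
have [c fc] := bounded_prefix_family (fun m => (fP (kappa m, m)).1) kL.
have cout m : (M 0 <= m)%N -> ~ U c (u m).
  by move=> M0m /(Umono _ _ (fc m)); apply: (fP (kappa m, m)).2; exact: kM.
apply: (ucl _ (U0 c)); apply: sub_finite_set (finite_II (M 0)) => m /= cum.
by rewrite ltnNge; apply/negP => /cout; apply.
Qed.

Lemma s_star_cs_star_network : P2 E -> P3 E.
Proof.
move=> [Nf [cNf Ns]]; exists Nf; split => // O O0 u /cvg_clusters_at; exact: Ns.
Qed.

Lemma cs_star_cs_bullet_network : P3 E -> P4 E.
Proof.
move=> [Nf [cNf Ncs]]; exists Nf; split => // O O0 u ux.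
have [N NfN [NO /infinite_setN0[n Nun]]] := Ncs O O0 u ux.
by exists N => //; split => //; exists n.
Qed.

Lemma cs_bullet_radial_network : P4 E -> P5 E.
Proof.
move=> [Nf [cNf Nbul]]; exists Nf; split => // U U0 x.
have hx : (fun n => harmonic n *: x) @ \oo --> 0 :=
  cvg_scale_bounded0 cvg_harmonic (tvs_bounded_set1 x) (fun=> erefl).
have [N NfN [NU [n Nn]]] := Nbul U U0 _ hx.
by exists N => //; exists (harmonic n); rewrite lt0r_neq0 ?harmonic_gt0.
Qed.

Lemma radial_network_bounded_subsets : P5 E -> P6 E.
Proof.
move=> [Nf [/countable_injP[code code_inj] Nrad]] A Aunc.
have [y Ay] := uncountable_condensation (radial_code Nf code) Aunc.
have /choice [e eS] : forall j, exists e : nat -> E,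
    (forall i, A (e i) /\ forall k, (k < j)%N ->
      radial_code Nf code (e i) k = radial_code Nf code y k) /\ injective e.
  by move=> j; have [e eSj einj] := infinite_set_injective_seq (Ay j); exists e.
pose B := [set x | exists j i, (i <= j)%N /\ x = e j i].
exists B; split; [|split].
- by move=> _ [j [i [_ ->]]]; exact: ((eS j).1 i).1.
- by apply: (infinite_set_of_injective_rows (fun j => (eS j).2)) => j i ij; exists j, i.
move=> U U0.
have [d d0 [W W0 dW]] := nbhs0_scale 0 U0.
have [F NfF [eps [eps0 [Fy FW]]]] := Nrad W W0 y.
have code_y := radial_code_neq0 code NfF eps0 Fy.
pose k := code F; pose m := radial_code Nf code y k.
have Bsplit : B `<=` dilates W m `|` [set e p.1 p.2 | p in `I_k.+1 `*` `I_k.+1].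
  move=> _ [j [i [ij ->]]]; have [ltkj|lejk] := ltnP k j; last first.
    by right; exists (j, i) => //; split; rewrite /= ltnS // (leq_trans ij).
  have [_ /(_ k ltkj) codek] := (eS j).1 i.
  have codek0 : (radial_code Nf code (e j i) k != 0)%N by rewrite codek.
  have [G [NfG codeG]] := radial_codeP codek0.
  rewrite codek -/m => -[eps' eps'0 [Gx em]].
  have GF : G = F by apply: code_inj; rewrite ?inE.
  by left; exists eps' => //; split => //; apply: FW; rewrite -GF.
have Bfin : finite_set [set e p.1 p.2 | p in `I_k.+1 `*` `I_k.+1].
  exact/finite_image/finite_setX/finite_II/finite_II.
have [N _ /(_ N (leqnn N))[absW absfin]] :=
  filterI (dilates_absorbed m d0 dW) (nbhs0_absorbs_finite U0 Bfin).
by exists N => x /Bsplit[/absW|/absfin].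
Qed.

Lemma bounded_subsets_infinite_dim_compact :
  (exists B : set E, hamel_basis B /\ ~ countable B) -> P6 E -> P7 E.
Proof.
move=> [B [[Bfree _] Bunc]] P6E.
have [A [AB [Ainf Abd]]] := P6E B Bunc.
have [b bA binj] := infinite_set_injective_seq Ainf.
exists (0 |` range (fun n => harmonic n *: b n)); split.
  exact/cvg_compact_range/(cvg_scale_bounded0 cvg_harmonic Abd bA).
have harmonic_neq0 k : harmonic k != 0 :> R by rewrite lt0r_neq0 ?harmonic_gt0.
move=> n v /(subset_trans (@subsetUr _ _ _)).
exact: (lin_independent_not_fin_span Bfree binj (fun k => AB _ (bA k)) harmonic_neq0).
Qed.

End TopologicalVectorSpace.

Theorem theorem5p2 (R : realType) (E : tvsType R) (hE : hausdorff_space E) :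
  (P1 E -> P2 E) /\ (P2 E -> P3 E) /\ (P3 E -> P4 E) /\ (P4 E -> P5 E) /\
  (P5 E -> P6 E) /\
  ((exists B : set E, hamel_basis B /\ ~ countable B) -> P6 E -> P7 E).
Proof.
split; first exact: omega_base_s_star_network.
split; first exact: s_star_cs_star_network.
split; first exact: cs_star_cs_bullet_network.
split; first exact: cs_bullet_radial_network.
split; first exact: radial_network_bounded_subsets.
exact: bounded_subsets_infinite_dim_compact.
Qed.
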